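(* Let $h=\prod_{i=1}^N h_i$ with $h_i\in\bar K[z]$ nonzero, let $h_i=q_i^2+\rho_i$ be part-square decompositions, and set $q=\prod_{i=1}^N q_i$ and $\rho=h-q^2$. Put $t_i=t_{q_i,\rho_i}$ and $t=t_{q,\rho}=v(\rho)-v(h)$, and assume $t_i\ge0$ for all $i$. Then $t\ge\min\{t_1,\dots,t_N\}$. Moreover: (a) if the minimum $\min\{t_1,\dots,t_N\}$ is attained by a unique index $i_0$, then $t=\min\{t_1,\dots,t_N\}$, and the decomposition $h=q^2+\rho$ is good if and only if the decomposition $h_{i_0}=q_{i_0}^2+\rho_{i_0}$ is good; (b) if $N=2$, every root $s_1\in\bar K$ of $h_1$ satisfies $v(s_1)>0$, every root $s_2\in\bar K$ of $h_2$ satisfies $v(s_2)<0$, both decompositions $h_i=q_i^2+\rho_i$ are good, and $\min\{t_1,t_2\}<2v(2)$, then $t=\min\{t_1,t_2\}$ and the decomposition $h=q^2+\rho$ is good.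
   Context: $K$ is a field of characteristic $0$, complete with respect to a discrete valuation $v$ (values in $\mathbb{Q}\cup\{+\infty\}$), with algebraically closed residue field $k$ of characteristic $2$; $v$ extends to a fixed algebraic closure $\bar K$. For nonzero $h(z)=\sum_iH_iz^i\in\bar K[z]$, $v(h)=\min_iv(H_i)$ (Gauss valuation). A part-square decomposition of $h$ is $h=q^2+\rho$ with $q,\rho\in\bar K[z]$, $\deg q\le\lceil\deg h/2\rceil$; $t_{q,\rho}=v(\rho)-v(h)$. A decomposition $h=q^2+\rho$ is good if either $t_{q,\rho}\ge2v(2)$, or $t_{q,\rho}<2v(2)$ and there is no part-square decomposition $h=\tilde q^2+\tilde\rho$ with $t_{\tilde q,\tilde\rho}>t_{q,\rho}$. *)

From HB Require Import structures.
From mathcomp Require Import all_boot all_order all_algebra.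
From mathcomp Require Import constructive_ereal.
Set Implicit Arguments. Unset Strict Implicit. Unset Printing Implicit Defensive.
Import Order.TTheory GRing.Theory Num.Theory.
Local Open Scope ring_scope.
Local Open Scope ereal_scope.

Definition is_valuation (F : fieldType) (v : F -> \bar rat) : Prop :=
  [/\ forall x : F, v x = +oo <-> x = 0%R,
      forall x : F, x != 0%R -> exists r : rat, v x = r%:E,
      forall x y : F, v (x * y)%R = v x + v y &
      forall x y : F, Order.min (v x) (v y) <= v (x + y)%R].

(* Standing setting: Kbar is an algebraic closure of K (a subfield of Kbar,
   given as a predicate), K has characteristic 0, v is a valuation on Kbar
   whose restriction to K is discrete (value group c Z, c > 0), K is complete
   w.r.t. v, the residue field of K is algebraically closed and has
   characteristic 2 (i.e. v(2) > 0). *)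
Record setting (Kbar : closedFieldType) (K : {pred Kbar}) (v : Kbar -> \bar rat)
  : Prop := Setting {
  char0 : [pchar Kbar] =i pred0;
  K1 : (1%R : Kbar) \in K;
  KB : forall x y, x \in K -> y \in K -> (x - y)%R \in K;
  KM : forall x y, x \in K -> y \in K -> (x * y)%R \in K;
  KV : forall x, x \in K -> x^-1%R \in K;
  Kbar_alg : forall x : Kbar, exists p : {poly Kbar},
      [/\ p != 0%R, p \is a polyOver K & root p x];
  v_val : is_valuation v;
  v_discrete : exists c : rat, [/\ (0 < c)%R,
      forall x, x \in K -> x != 0%R -> exists n : int, v x = (n%:~R * c)%R%:E &
      exists x, x \in K /\ v x = c%:E];
  K_complete : forall u : nat -> Kbar, (forall n, u n \in K) ->
      (forall M : rat, exists N, forall m n, (N <= m)%N -> (N <= n)%N ->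
          M%:E <= v (u m - u n)%R) ->
      exists l, l \in K /\
      (forall M : rat, exists N, forall n, (N <= n)%N -> M%:E <= v (u n - l)%R);
  residue_alg_closed : forall p : {poly Kbar}, p \is monic ->
      (forall i, p`_i \in K /\ 0 <= v p`_i) -> (1 < size p)%N ->
      exists a, [/\ a \in K, 0 <= v a & 0 < v p.[a]];
  residue_char2 : 0 < v 2%R
}.

Definition gaussv (F : fieldType) (v : F -> \bar rat) (h : {poly F}) : \bar rat :=
  \big[Order.min/+oo]_(i < size h) v h`_i.

(* part-square decomposition h = q^2 + rho with deg q <= ceil(deg h / 2) *)
Definition part_square (F : fieldType) (h q rho : {poly F}) : Prop :=
  h = (q ^+ 2 + rho)%R /\ (size q <= (uphalf (size h).-1).+1)%N.

Definition tqr (F : fieldType) (v : F -> \bar rat) (h rho : {poly F}) : \bar rat :=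
  gaussv v rho - gaussv v h.

Definition good (F : fieldType) (v : F -> \bar rat) (h q rho : {poly F}) : Prop :=
  h = (q ^+ 2 + rho)%R /\
  (2%:E * v 2%R <= tqr v h rho \/
   (tqr v h rho < 2%:E * v 2%R /\
    ~ exists q' rho', part_square h q' rho' /\ tqr v h rho < tqr v h rho')).

From HB Require Import structures.
From mathcomp Require Import all_boot all_order all_algebra.
From mathcomp Require Import constructive_ereal.
From mathcomp Require Import ring lra zify.
Import Order.TTheory GRing.Theory Num.Theory.
Set Implicit Arguments. Unset Strict Implicit. Unset Printing Implicit Defensive.
Local Open Scope ring_scope.
Local Open Scope ereal_scope.

(* Write v(f) for the Gauss valuation, so that t = v(rho) - v(h); by Gauss's
   lemma v(fg) = v(f) + v(g). From
     h1 h2 - (q1 q2)^2 = (h1 - q1^2) h2 + q1^2 (h2 - q2^2)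
   one gets t >= min t_i, with equality when the minimum is attained at a single
   index i0, the term rho_i0 * prod_(j <> i0) h_j being then dominant.
   Since v(2) > 0, a square d^2 agrees with the sum of the d_i^2 X^(2i) up to
   terms of valuation >= 2 v(d) + v(2). Hence, when 0 <= t < 2 v(2), the
   decomposition h = q^2 + rho is good iff some odd coefficient of rho has the
   minimal valuation v(h) + t: otherwise the even part of rho is a square up to
   smaller terms, which improves q (and the improved q can be truncated to the
   allowed degree); conversely a better decomposition forces all odd coefficients
   of rho to be small. Multiplying by the other factors, which are squares up to
   small terms, preserves this criterion, which gives (a).
   In (b), the conditions on the roots make the leading coefficient of h1 and the
   constant coefficient of h2 the unique coefficients of minimal valuation; an odd
   coefficient of rho1 of minimal valuation, which the degree bound on q1 places
   at or below deg h1, then yields an odd coefficient of rho of minimal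
   valuation. *)

Lemma le_ereal_rat (x y : \bar rat) :
  (forall r : rat, r%:E <= x -> r%:E <= y) -> x <= y.
Proof.
case: x => [r||] h; [exact: h | | by rewrite leNye].
case: y h => [s||] h //; last by have := h 0%R (leey _).
by have := h (s + 1)%R (leey _); rewrite lee_fin => ?; exfalso; lra.
Qed.

Lemma bigmin_eq_of_le (I : finType) (f : I -> \bar rat) i0 :
  (forall j, f i0 <= f j) -> \big[Order.min/+oo]_j f j = f i0.
Proof.
move=> h; apply/eqP; rewrite eq_le (bigmin_le _ i0 f).
by apply/bigmin_geP; split=> [|j _]; [exact: leey | exact: h].
Qed.

(** * Gauss valuation *)

Section Valuation.
Variables (F : fieldType) (v : F -> \bar rat).
Hypothesis hv : is_valuation v.

Lemma v0 : v 0%R = +oo.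
Proof. by case: hv => h _ _ _; exact: (proj2 (h 0%R) erefl). Qed.

Lemma v_fin x : x != 0%R -> exists r, v x = r%:E.
Proof. by case: hv => _ h _ _; apply: h. Qed.

Lemma vM x y : v (x * y)%R = v x + v y.
Proof. by case: hv. Qed.

Lemma v1 : v 1%R = 0%:E.
Proof.
have [r hr] := v_fin (oner_neq0 F).
by have := vM 1 1; rewrite mulr1 hr -EFinD => -[] e; congr (_%:E); lra.
Qed.

Lemma vN x : v (- x)%R = v x.
Proof.
have [r hr] : exists r, v (-1) = r%:E by apply: v_fin; rewrite oppr_eq0 oner_neq0.
have vN1 : v (-1)%R = 0%:E.
  have := vM (-1) (-1); rewrite mulrNN mulr1 v1 hr -EFinD => -[] e.
  by congr (_%:E); lra.
by rewrite -mulN1r vM vN1 add0e.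
Qed.

Lemma vD_ge r x y : r%:E <= v x -> r%:E <= v y -> r%:E <= v (x + y)%R.
Proof. by case: hv => _ _ _ hD h1 h2; apply: le_trans (hD x y); rewrite le_min h1. Qed.

Lemma vD_gt r x y : r%:E < v x -> r%:E < v y -> r%:E < v (x + y)%R.
Proof. by case: hv => _ _ _ hD h1 h2; apply: lt_le_trans (hD x y); rewrite lt_min h1. Qed.

Lemma vB_gt r x y : r%:E < v x -> r%:E < v y -> r%:E < v (x - y)%R.
Proof. by move=> h1 h2; apply: vD_gt; rewrite ?vN. Qed.

Lemma vD_eq r x y : v x = r%:E -> r%:E < v y -> v (x + y)%R = r%:E.
Proof.
move=> hx hy; apply/eqP; rewrite eq_le -{2}hx; apply/andP; split; last first.
  by case: hv => _ _ _ hD; apply: le_trans (hD x y); rewrite le_min lexx hx ltW.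
rewrite leNgt; apply/negP => h.
by have := vB_gt h hy; rewrite addrK hx ltxx.
Qed.

Lemma vM_ge r s x y : r%:E <= v x -> s%:E <= v y -> (r + s)%:E <= v (x * y)%R.
Proof. by move=> h1 h2; rewrite vM EFinD leeD. Qed.

Lemma vM_gtr r s x y : r%:E <= v x -> s%:E < v y -> (r + s)%:E < v (x * y)%R.
Proof. by move=> h1 h2; rewrite vM EFinD lee_ltD. Qed.

Lemma vM_gtl r s x y : r%:E < v x -> s%:E <= v y -> (r + s)%:E < v (x * y)%R.
Proof. by move=> h1 h2; rewrite vM EFinD lte_leD. Qed.

Lemma vsum_ge r (I : Type) (s : seq I) (P : pred I) (G : I -> F) :
  (forall i, P i -> r%:E <= v (G i)) -> r%:E <= v (\sum_(i <- s | P i) G i)%R.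
Proof. by move=> h; elim/big_ind: _ => //; [rewrite v0 leey | exact: vD_ge]. Qed.

Lemma vsum_gt r (I : Type) (s : seq I) (P : pred I) (G : I -> F) :
  (forall i, P i -> r%:E < v (G i)) -> r%:E < v (\sum_(i <- s | P i) G i)%R.
Proof. by move=> h; elim/big_ind: _ => //; [rewrite v0 ltey | exact: vD_gt]. Qed.

Definition gauss_ge (f : {poly F}) (x : rat) := forall i, x%:E <= v f`_i.
Definition gauss_gt (f : {poly F}) (x : rat) := forall i, x%:E < v f`_i.
Definition gauss_eq (f : {poly F}) (x : rat) :=
  gauss_ge f x /\ exists i, v f`_i = x%:E.

Lemma gauss_gtW f x : gauss_gt f x -> gauss_ge f x.
Proof. by move=> h i; apply: ltW. Qed.

Lemma gauss_ge_le f x y : gauss_ge f x -> (y <= x)%R -> gauss_ge f y.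
Proof. by move=> h hl i; apply: le_trans (h i); rewrite lee_fin. Qed.

Lemma gauss_gt_le f x y : gauss_gt f x -> (y <= x)%R -> gauss_gt f y.
Proof. by move=> h hl i; apply: le_lt_trans (h i); rewrite lee_fin. Qed.

Lemma gauss_ge_lt f x y : gauss_ge f x -> (y < x)%R -> gauss_gt f y.
Proof. by move=> h hl i; apply: lt_le_trans (h i); rewrite lte_fin. Qed.

Lemma gauss_ge0 x : gauss_ge 0%R x.
Proof. by move=> i; rewrite coef0 v0 leey. Qed.

Lemma gauss_gt0 x : gauss_gt 0%R x.
Proof. by move=> i; rewrite coef0 v0 ltey. Qed.

Lemma gauss_ge1 : gauss_ge 1%R 0.
Proof. by move=> i; rewrite coefC; case: eqP => _; rewrite ?v1 // v0 leey. Qed.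

Lemma gauss_geD f g x : gauss_ge f x -> gauss_ge g x -> gauss_ge (f + g)%R x.
Proof. by move=> h1 h2 i; rewrite coefD; apply: vD_ge. Qed.

Lemma gauss_gtD f g x : gauss_gt f x -> gauss_gt g x -> gauss_gt (f + g)%R x.
Proof. by move=> h1 h2 i; rewrite coefD; apply: vD_gt. Qed.

Lemma gauss_geB f g x : gauss_ge f x -> gauss_ge g x -> gauss_ge (f - g)%R x.
Proof. by move=> h1 h2 i; rewrite coefB; apply: vD_ge; rewrite ?vN. Qed.

Lemma gauss_gtB f g x : gauss_gt f x -> gauss_gt g x -> gauss_gt (f - g)%R x.
Proof. by move=> h1 h2 i; rewrite coefB; apply: vB_gt. Qed.

Lemma gauss_geM f g x y :
  gauss_ge f x -> gauss_ge g y -> gauss_ge (f * g)%R (x + y).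
Proof. by move=> h1 h2 i; rewrite coefM; apply: vsum_ge => j _; apply: vM_ge. Qed.

Lemma gauss_gtMr f g x y :
  gauss_ge f x -> gauss_gt g y -> gauss_gt (f * g)%R (x + y).
Proof. by move=> h1 h2 i; rewrite coefM; apply: vsum_gt => j _; apply: vM_gtr. Qed.

Lemma gauss_gtMl f g x y :
  gauss_gt f x -> gauss_ge g y -> gauss_gt (f * g)%R (x + y).
Proof. by move=> h1 h2 i; rewrite coefM; apply: vsum_gt => j _; apply: vM_gtl. Qed.

Lemma gaussv_le f i : gaussv v f <= v f`_i.
Proof.
rewrite /gaussv; have [hi|hi] := ltnP i (size f).
  exact: (bigmin_le _ (Ordinal hi) (fun i : 'I_(size f) => v f`_i)).
by rewrite nth_default // v0 leey.
Qed.

Lemma gaussv_attained f : f != 0%R -> exists i, gaussv v f = v f`_i.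
Proof.
rewrite -size_poly_gt0 => hs.
have [i _ e] := eq_bigmin (Ordinal hs) (fun _ => true)
  (fun i : 'I_(size f) => v f`_i) erefl (fun i _ => leey _).
by exists i; rewrite /gaussv e.
Qed.

Lemma gaussv0 : gaussv v 0%R = +oo.
Proof. by rewrite /gaussv size_poly0 big_ord0. Qed.

Lemma gaussv_geP f x : x%:E <= gaussv v f <-> gauss_ge f x.
Proof.
split=> [h i|h]; first exact: le_trans h (gaussv_le f i).
by apply/bigmin_geP; split=> [|i _]; rewrite ?leey.
Qed.

Lemma gaussv_gtP f x : x%:E < gaussv v f <-> gauss_gt f x.
Proof.
split=> [h i|h]; first exact: lt_le_trans h (gaussv_le f i).
by have [->|/gaussv_attained [i ->] //] := eqVneq f 0%R; rewrite gaussv0 ltey.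
Qed.

Lemma gauss_eq_gaussv f x : gauss_eq f x -> gaussv v f = x%:E.
Proof.
move=> [hge [i hi]]; apply/eqP; rewrite eq_le -{1}hi gaussv_le.
exact/gaussv_geP.
Qed.

Lemma gauss_eq_uniq f x y : gauss_eq f x -> gauss_eq f y -> x = y.
Proof. by move=> /gauss_eq_gaussv h1 /gauss_eq_gaussv; rewrite h1 => -[]. Qed.

Lemma gauss_eq_exists f : f != 0%R -> exists x, gauss_eq f x.
Proof.
move=> fn0; have [i hi] := gaussv_attained fn0.
have [r hr] : exists r, v f`_i = r%:E.
  apply: v_fin; apply/eqP => hz.
  have := gaussv_le f (size f).-1; rewrite hi hz v0 -lead_coefE.
  have [r ->] : exists r, v (lead_coef f) = r%:E by apply: v_fin; rewrite lead_coef_eq0.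
  by rewrite leNgt ltey.
by exists r; split; [apply/gaussv_geP; rewrite hi hr | exists i].
Qed.

Lemma gauss_lt_coef f x : ~ gauss_gt f x -> exists i, v f`_i <= x%:E.
Proof.
move=> hn; have [fz|/gaussv_attained [i hi]] := eqVneq f 0%R.
  by exfalso; apply: hn; rewrite fz; exact: gauss_gt0.
by exists i; rewrite -hi leNgt; apply/negP => /gaussv_gtP.
Qed.

Definition dominant_coef (f : {poly F}) k (b : rat) :=
  v f`_k = b%:E /\ forall j, j != k -> b%:E < v f`_j.

Lemma gauss_eq_dominant f k b : dominant_coef f k b -> gauss_eq f b.
Proof.
move=> [hk hj]; split; last by exists k.
by move=> j; have [->|/hj/ltW //] := eqVneq j k; rewrite hk.
Qed.

Lemma gauss_eqD f g x : gauss_eq f x -> gauss_gt g x -> gauss_eq (f + g)%R x.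
Proof.
move=> [hf [i hi]] hg; split; first exact: gauss_geD hf (gauss_gtW hg).
by exists i; rewrite coefD; apply: vD_eq.
Qed.

Lemma gauss_eqB f g x : gauss_eq f x -> gauss_gt g x -> gauss_eq (f - g)%R x.
Proof.
move=> [hf [i hi]] hg; split; first exact: gauss_geB hf (gauss_gtW hg).
by exists i; rewrite coefB; apply: vD_eq; rewrite ?vN.
Qed.

(* Gauss's lemma: look at the coefficient of index [i + j], where [i] and [j]
   are the first indices at which [f] and [g] reach their Gauss valuations. *)
Lemma gauss_eqM f g x y :
  gauss_eq f x -> gauss_eq g y -> gauss_eq (f * g)%R (x + y).
Proof.
move=> [hf ef] [hg eg]; split; first exact: gauss_geM.
have ef' : exists n, v f`_n == x%:E by case: ef => n hn; exists n; apply/eqP.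
have eg' : exists n, v g`_n == y%:E by case: eg => n hn; exists n; apply/eqP.
case: (ex_minnP ef') => i /eqP hi mi; case: (ex_minnP eg') => j /eqP hj mj.
have hik : (i < (i + j).+1)%N by rewrite ltnS leq_addr.
exists (i + j)%N; rewrite coefM (bigD1 (Ordinal hik)) //= addKn.
apply: vD_eq; first by rewrite vM hi hj.
apply: vsum_gt => k /eqP hk; have {}hk : (k : nat) != i.
  by apply/eqP => e; apply: hk; apply: val_inj.
have [lt|ge] := ltnP k i.
  apply: vM_gtl => //; rewrite lt_neqAle hf andbT; apply/eqP => e.
  by have := mi k (introT eqP (esym e)); rewrite leqNgt lt.
apply: vM_gtr => //; rewrite lt_neqAle hg andbT; apply/eqP => e.
have := mj _ (introT eqP (esym e)); rewrite leqNgt.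
by move: (ltn_ord k) hk ge; move: (nat_of_ord k) => kk; lia.
Qed.

Lemma gauss_eq_prod (I : Type) (s : seq I) (P : pred I) (fs : I -> {poly F})
    (xs : I -> rat) :
  (forall i, P i -> gauss_eq (fs i) (xs i)) ->
  gauss_eq (\prod_(i <- s | P i) fs i)%R (\sum_(i <- s | P i) xs i)%R.
Proof.
move=> h; elim: s => [|y s IH].
  by rewrite !big_nil; split; [exact: gauss_ge1 | exists 0%N; rewrite coefC v1].
by rewrite !big_cons; case: ifP => // Py; exact: gauss_eqM (h y Py) IH.
Qed.

Lemma gauss_ge_prod (I : Type) (s : seq I) (P : pred I) (fs : I -> {poly F})
    (xs : I -> rat) :
  (forall i, P i -> gauss_ge (fs i) (xs i)) ->
  gauss_ge (\prod_(i <- s | P i) fs i)%R (\sum_(i <- s | P i) xs i)%R.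
Proof.
move=> h; elim: s => [|y s IH]; first by rewrite !big_nil; exact: gauss_ge1.
by rewrite !big_cons; case: ifP => // Py; exact: gauss_geM (h y Py) IH.
Qed.

Lemma gauss_ge_of_sqr f x : gauss_ge (f ^+ 2)%R x -> gauss_ge f (x / 2)%R.
Proof.
have [->|/gauss_eq_exists [m hm]] := eqVneq f 0%R; first by move=> _; exact: gauss_ge0.
have [_ [k hk]] := gauss_eqM hm hm; move=> /(_ k); rewrite expr2 hk lee_fin => hx.
by apply: gauss_ge_le (proj1 hm) _; lra.
Qed.

Lemma gauss_eq_of_sqr f x : gauss_eq (f ^+ 2)%R x -> gauss_eq f (x / 2)%R.
Proof.
move=> h; have [fz|/gauss_eq_exists [m hm]] := eqVneq f 0%R.
  by case: h => _ [i]; rewrite fz expr0n /= coef0 v0.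
rewrite (gauss_eq_uniq h (gauss_eqM hm hm : gauss_eq (f ^+ 2)%R _)).
by have -> : ((m + m) / 2 = m)%R by field.
Qed.

Lemma gauss_ge_decomp_sqr (h q rho : {poly F}) a :
  gauss_ge h a -> h = (q ^+ 2 + rho)%R -> gauss_ge rho a -> gauss_ge (q ^+ 2)%R a.
Proof.
move=> hh eh hr; have -> : (q ^+ 2 = h - rho)%R by rewrite eh addrK.
exact: gauss_geB.
Qed.

(* [E] is the sum of the [d_i^2 X^(2i)] and [C] that of the cross terms
   [d_i d_j X^(i+j)] with [i < j]. *)
Lemma sqr_decomp d : exists E C : {poly F},
  [/\ (d ^+ 2 = E + C *+ 2)%R,
      forall k, odd k -> E`_k = 0%R,
      forall i, E`_i.*2 = (d`_i ^+ 2)%R &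
      forall x, gauss_ge d x -> gauss_ge C (x + x)].
Proof.
elim/poly_ind: d => [|p c [E [C [hp hodd hev hC]]]].
  exists 0%R, 0%R; split=> [|k _|i|x _]; rewrite ?coef0 ?expr0n ?mul0rn ?addr0 //.
  exact: gauss_ge0.
exists (E * 'X^2 + (c ^+ 2)%:P)%R, (C * 'X^2 + c%:P * p * 'X)%R; split.
- have -> : ((p * 'X + c%:P) ^+ 2 =
      p ^+ 2 * 'X^2 + (c%:P * p * 'X) *+ 2 + (c ^+ 2)%:P)%R.
    by rewrite (rmorphXn polyC); ring.
  by rewrite hp; ring.
- move=> [|[|k]] hk //; rewrite coefD coefMXn coefC /= ?addr0 //.
  by rewrite subn2 hodd //; move: hk => /=; rewrite negbK.
- move=> [|i]; rewrite coefD coefMXn coefC coefD coefMX coefC /= ?add0r //.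
  by rewrite !addr0 doubleS subn2 /= hev.
- move=> x hx; have hp' : gauss_ge p x.
    by move=> i; have := hx i.+1; rewrite coefD coefMX coefC /= addr0.
  have hc : x%:E <= v c by have := hx 0%N; rewrite coefD coefMX coefC /= add0r.
  apply: gauss_geD => i.
    by rewrite coefMXn; case: ifP => _; [rewrite v0 leey | exact: hC].
  rewrite -mulrA coefCM; apply: vM_ge => //.
  by rewrite coefMX; case: eqP => _; [rewrite v0 leey | apply: hp'].
Qed.

Lemma prod_sqr_defect (f g p q : {poly F}) :
  (f * g - (p * q) ^+ 2 = (f - p ^+ 2) * g + p ^+ 2 * (g - q ^+ 2))%R.
Proof. by rewrite exprMn; ring. Qed.

Section ProductDefect.
Variables (I : Type) (s : seq I) (P : pred I) (hs qs : I -> {poly F}).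
Variables (xs : I -> rat) (r : rat).
Hypothesis hs_ge : forall i, P i -> gauss_ge (hs i) (xs i).
Hypothesis qs_ge : forall i, P i -> gauss_ge (qs i ^+ 2)%R (xs i).

Lemma prod_defect_ge :
  (forall i, P i -> gauss_ge (hs i - qs i ^+ 2)%R (xs i + r)) ->
  gauss_ge (\prod_(i <- s | P i) hs i - (\prod_(i <- s | P i) qs i) ^+ 2)%R
           ((\sum_(i <- s | P i) xs i) + r)%R.
Proof.
move=> hr; elim: s => [|y t IH].
  by rewrite !big_nil expr1n subrr; exact: gauss_ge0.
rewrite !big_cons; case: ifP => // Py; rewrite prod_sqr_defect.
have -> : (xs y + \sum_(i <- t | P i) xs i + r =
           (xs y + r) + \sum_(i <- t | P i) xs i)%R by ring.
apply: gauss_geD; first exact: gauss_geM (hr y Py) (gauss_ge_prod t hs_ge).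
by rewrite -addrA [(r + _)%R]addrC; exact: gauss_geM (qs_ge Py) IH.
Qed.

Lemma prod_defect_gt :
  (forall i, P i -> gauss_gt (hs i - qs i ^+ 2)%R (xs i + r)) ->
  gauss_gt (\prod_(i <- s | P i) hs i - (\prod_(i <- s | P i) qs i) ^+ 2)%R
           ((\sum_(i <- s | P i) xs i) + r)%R.
Proof.
move=> hr; elim: s => [|y t IH].
  by rewrite !big_nil expr1n subrr; exact: gauss_gt0.
rewrite !big_cons; case: ifP => // Py; rewrite prod_sqr_defect.
have -> : (xs y + \sum_(i <- t | P i) xs i + r =
           (xs y + r) + \sum_(i <- t | P i) xs i)%R by ring.
apply: gauss_gtD; first exact: gauss_gtMl (hr y Py) (gauss_ge_prod t hs_ge).
by rewrite -addrA [(r + _)%R]addrC; exact: gauss_gtMr (qs_ge Py) IH.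
Qed.

End ProductDefect.

Lemma tqr_geP (h rho : {poly F}) a r :
  gauss_eq h a -> r%:E <= tqr v h rho <-> gauss_ge rho (a + r).
Proof.
by move=> /gauss_eq_gaussv eh; rewrite /tqr eh leeBrDr // -EFinD addrC gaussv_geP.
Qed.

Lemma tqr_gtP (h rho : {poly F}) a r :
  gauss_eq h a -> r%:E < tqr v h rho <-> gauss_gt rho (a + r).
Proof.
by move=> /gauss_eq_gaussv eh; rewrite /tqr eh lteBrDr // -EFinD addrC gaussv_gtP.
Qed.

Lemma tqr_le_coef (h rho : {poly F}) a r k :
  gauss_eq h a -> v rho`_k <= (a + r)%:E -> tqr v h rho <= r%:E.
Proof.
move=> hh hk; rewrite leNgt; apply/negP => /(tqr_gtP _ _ hh) /(_ k) hg.
by have := lt_le_trans hg hk; rewrite ltxx.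
Qed.

Lemma tqr_gauss_eq (h rho : {poly F}) a tau :
  gauss_eq h a -> gauss_eq rho (a + tau) -> tqr v h rho = tau%:E.
Proof.
rewrite /tqr => /gauss_eq_gaussv -> /gauss_eq_gaussv ->.
by rewrite -EFinB; congr _%:E; ring.
Qed.

Lemma gauss_eq_tqr (h rho : {poly F}) a tau :
  gauss_eq h a -> tqr v h rho = tau%:E -> gauss_eq rho (a + tau).
Proof.
move=> hh et; split; first by apply/(tqr_geP _ _ hh); rewrite et.
have [k hk] : exists k, v rho`_k <= (a + tau)%:E.
  by apply: gauss_lt_coef => /(tqr_gtP _ _ hh); rewrite et ltxx.
exists k; apply/eqP; rewrite eq_le hk.
by move: k {hk}; apply/(tqr_geP _ _ hh); rewrite et.
Qed.

Lemma last_min_coef f e : gauss_eq f e ->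
  exists k, v f`_k = e%:E /\ forall j, (k < j)%N -> e%:E < v f`_j.
Proof.
move=> [hge [n hn]].
have exP : exists n, v f`_n == e%:E by exists n; apply/eqP.
have ubP m : v f`_m == e%:E -> (m <= size f)%N.
  by apply: contraTT; rewrite -ltnNge => /ltnW hm; rewrite nth_default // v0.
case: (ex_maxnP exP ubP) => k /eqP hk mk; exists k; split=> // j hj.
rewrite lt_neqAle hge andbT; apply/eqP => ej.
by have := mk j (introT eqP (esym ej)); rewrite leqNgt hj.
Qed.

Lemma sqr_coef_last_min f e k : gauss_ge f e -> v f`_k = e%:E ->
  (forall j, (k < j)%N -> e%:E < v f`_j) -> v (f ^+ 2)%R`_k.*2 = (e + e)%:E.
Proof.
move=> hge hk gtk; have hkk : (k < k.*2.+1)%N by rewrite ltnS -addnn leq_addr.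
have ek : (k.*2 - k = k)%N by rewrite -addnn addnK.
rewrite expr2 coefM (bigD1 (Ordinal hkk)) //= ek.
apply: vD_eq; first by rewrite vM hk.
apply: vsum_gt => j /eqP hj; have {}hj : (j : nat) != k.
  by apply/eqP => e'; apply: hj; apply: val_inj.
have [lt|ge] := ltnP j k.
  by apply: vM_gtr => //; apply: gtk; move: lt; move: (j : nat) => jj; lia.
by apply: vM_gtl => //; apply: gtk; rewrite ltn_neqAle eq_sym hj.
Qed.

Lemma gauss_gtM_eq (g E : {poly F}) l e :
  gauss_eq E e -> gauss_gt (g * E)%R (l + e) <-> gauss_gt g l.
Proof.
move=> hE; split=> [hgE|hg]; last exact: gauss_gtMl hg (proj1 hE).
apply/gaussv_gtP; rewrite ltNge; apply/negP => hn.
have gn0 : g != 0%R by apply: contraTneq hn => ->; rewrite gaussv0 -ltNge ltey.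
have [m hm] := gauss_eq_exists gn0.
have ml : (m <= l)%R by rewrite -lee_fin -(gauss_eq_gaussv hm).
have [_ [k hk]] := gauss_eqM hm hE; have := hgE k.
by rewrite hk lte_fin; lra.
Qed.

Definition odd_coefs_gt (f : {poly F}) (L : rat) :=
  forall k, odd k -> L%:E < v f`_k.

Definition odd_part (f : {poly F}) : {poly F} :=
  \poly_(i < size f) (if odd i then f`_i else 0%R).

Lemma coef_odd_part f k : (odd_part f)`_k = if odd k then f`_k else 0%R.
Proof.
rewrite coef_poly; case: ltnP => // hk.
by case: ifP => // _; rewrite nth_default.
Qed.

Lemma odd_coefs_gtE f L : odd_coefs_gt f L <-> gauss_gt (odd_part f) L.
Proof.
split=> h k; first by rewrite coef_odd_part; case: ifP => [/h //|_]; rewrite v0 ltey.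
by move=> hk; have := h k; rewrite coef_odd_part hk.
Qed.

Lemma not_odd_coefs_gt f L :
  ~ odd_coefs_gt f L -> exists k, odd k /\ v f`_k <= L%:E.
Proof.
rewrite odd_coefs_gtE => /gauss_lt_coef [k]; rewrite coef_odd_part.
by case: ifP => [hk|_]; [exists k | rewrite v0 leNgt ltey].
Qed.

Lemma odd_coefs_gtD f g L :
  gauss_gt g L -> odd_coefs_gt (f + g)%R L <-> odd_coefs_gt f L.
Proof.
move=> hg; split=> h k hk; last by rewrite coefD; apply: vD_gt; [apply: h | apply: hg].
by have := vB_gt (h k hk) (hg k); rewrite coefD addrK.
Qed.

Lemma odd_partM_even (f E : {poly F}) : (forall k, odd k -> E`_k = 0%R) ->
  odd_part (f * E)%R = (odd_part f * E)%R.
Proof.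
move=> hE; apply/polyP => k; rewrite coef_odd_part !coefM.
case: ifP => hk; last symmetry.
  apply: eq_bigr => j _; rewrite coef_odd_part; case: ifP => // hj.
  have hjk : (j <= k)%N by rewrite -ltnS.
  by rewrite hE ?mulr0 // oddB // hk hj.
apply: big1 => j _; rewrite coef_odd_part; case: ifP => hj; last by rewrite mul0r.
have hjk : (j <= k)%N by rewrite -ltnS.
by rewrite hE ?mulr0 // oddB // hk hj.
Qed.

Lemma odd_coefs_gtM_even (f E : {poly F}) l e :
  (forall k, odd k -> E`_k = 0%R) -> gauss_eq E e ->
  odd_coefs_gt (f * E)%R (l + e) <-> odd_coefs_gt f l.
Proof.
by move=> hodd hE; rewrite !odd_coefs_gtE odd_partM_even //; exact: gauss_gtM_eq.
Qed.

(** * Good decompositions *)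

Section ResidueCharTwo.
Variable w2 : rat.
Hypothesis hw2 : v 2%R = w2%:E.
Hypothesis w2_gt0 : (0 < w2)%R.

Lemma gauss_geMn2 f x : gauss_ge f x -> gauss_ge (f *+ 2)%R (w2 + x).
Proof. by move=> h i; rewrite coefMn -mulr_natl vM hw2 EFinD leeD. Qed.

Lemma gauss_gtMn2 f x : gauss_gt f x -> gauss_gt (f *+ 2)%R (w2 + x).
Proof. by move=> h i; rewrite coefMn -mulr_natl vM hw2 EFinD lee_ltD. Qed.

Lemma odd_coef_sqr_ge d x k :
  gauss_ge d x -> odd k -> (w2 + (x + x))%:E <= v (d ^+ 2)%R`_k.
Proof.
move=> hd hk; have [E [C [-> hodd _ hC]]] := sqr_decomp d.
by rewrite coefD hodd // add0r; apply: gauss_geMn2; apply: hC.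
Qed.

(* With [d = q' - q] we have [rho = rho' + 2qd + d^2]. If [d] had valuation
   [< (a + tau)/2], then [d^2 = rho - rho' - 2qd] would have valuation
   [> 2 v(d)]; so all three terms have small odd coefficients. *)
Lemma odd_coefs_gt_of_better_decomp (h q q' rho rho' : {poly F}) a tau :
  h = (q ^+ 2 + rho)%R -> h = (q' ^+ 2 + rho')%R ->
  gauss_ge q (a / 2) -> gauss_ge q' (a / 2) ->
  gauss_ge rho (a + tau) -> gauss_gt rho' (a + tau) -> (tau < 2 * w2)%R ->
  odd_coefs_gt rho (a + tau).
Proof.
move=> e1 e2 hq hq' hr hr' t2 k hk; have w2p := w2_gt0; set d := (q' - q)%R.
have erho : rho = (rho' + (q * d) *+ 2 + d ^+ 2)%R.
  have -> : rho = (h - q ^+ 2)%R by rewrite e1; ring.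
  by rewrite e2 /d; ring.
have [/gaussv_geP hd|] := boolP (((a + tau) / 2)%:E <= gaussv v d).
  rewrite erho coefD (coefD rho'); apply: vD_gt; first apply: vD_gt; first exact: hr'.
    by apply: lt_le_trans _ (gauss_geMn2 (gauss_geM hq hd) k); rewrite lte_fin; lra.
  by apply: lt_le_trans _ (odd_coef_sqr_ge hd hk); rewrite lte_fin; lra.
rewrite -ltNge => hd; exfalso.
have dn0 : d != 0%R.
  by apply: contraTneq hd => ->; rewrite gaussv0 -leNgt leey.
have [e he] := gauss_eq_exists dn0.
have ee : (e < (a + tau) / 2)%R by rewrite -lte_fin -(gauss_eq_gaussv he).
have [_ [k' hk']] := gauss_eqM he he.
have ed : (d * d = (rho - rho') - (q * d) *+ 2)%R by rewrite erho; ring.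
have hrr : gauss_gt (rho - rho')%R (e + e).
  by apply: gauss_ge_lt (gauss_geB hr (gauss_gtW hr')) _; lra.
have hqd : gauss_gt ((q * d) *+ 2)%R (e + e).
  by apply: gauss_ge_lt (gauss_geMn2 (gauss_geM hq (proj1 he))) _; lra.
by have := gauss_gtB hrr hqd k'; rewrite -ed hk' ltxx.
Qed.

Lemma size_le_double_uphalf n : (n <= (uphalf n).*2)%N.
Proof. by rewrite uphalf_half doubleD; have := odd_double_half n; case: odd => /=; lia. Qed.

(* Otherwise let [k] be the last index where [Qh] reaches its Gauss
   valuation: in degree [2k], beyond the degree of [h], the term [Qh_k^2]
   dominates the coefficient of [h - (Ql + Qh)^2]. *)
Lemma gauss_gt_high_part (h Ql Qh : {poly F}) a tau B :
  gauss_ge Ql (a / 2) -> (size Ql <= B)%N -> (forall j, (j < B)%N -> Qh`_j = 0%R) ->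
  (size h <= B.*2)%N -> (tau < 2 * w2)%R ->
  gauss_gt (h - (Ql + Qh) ^+ 2)%R (a + tau) -> gauss_gt Qh ((a + tau) / 2).
Proof.
move=> hQl sQl Qh_low sh t2 hgt; have w2p := w2_gt0.
apply/gaussv_gtP; rewrite ltNge; apply/negP => hn.
have Qhn0 : Qh != 0%R.
  by apply: contraTneq hn => ->; rewrite gaussv0 -ltNge ltey.
have [e he] := gauss_eq_exists Qhn0.
have eL : (e <= (a + tau) / 2)%R by rewrite -lee_fin -(gauss_eq_gaussv he).
have [k [hk gtk]] := last_min_coef he.
have kB : (B <= k)%N by rewrite leqNgt; apply/negP => /Qh_low hz; rewrite hz v0 in hk.
have cross : (e + e)%:E < v ((Ql * Qh) *+ 2)%R`_k.*2.
  rewrite coefMn -mulr_natl.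
  apply: le_lt_trans _ (vM_gtr (s := (a / 2 + e)%R) (_ : w2%:E <= v 2%:R) _).
  - by rewrite lee_fin; lra.
  - by rewrite hw2.
  rewrite coefM; apply: vsum_gt => j _; have [jB|Bj] := ltnP j B.
    by apply: vM_gtr; [exact: hQl | apply: gtk; move: jB kB; move: (j : nat) => jj; lia].
  by rewrite nth_default ?mul0r ?v0 ?ltey //; apply: leq_trans sQl Bj.
have : v (h - (Ql + Qh) ^+ 2)%R`_k.*2 = (e + e)%:E.
  rewrite coefB nth_default; last by apply: leq_trans sh _; rewrite leq_double.
  rewrite sub0r vN sqrrD addrC coefD (coefD (Ql ^+ 2)%R).
  apply: vD_eq; first exact: sqr_coef_last_min (proj1 he) hk gtk.
  rewrite nth_default ?add0r // expr2; apply: leq_trans (size_polyMleq _ _) _.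
  by move: sQl kB; move: (size Ql) => sq; lia.
by move=> hv2; have := hgt k.*2; rewrite hv2 lte_fin; lra.
Qed.

Lemma truncate_decomp (h Q : {poly F}) a tau : gauss_ge Q (a / 2) -> (tau < 2 * w2)%R ->
  gauss_gt (h - Q ^+ 2)%R (a + tau) ->
  exists Q' : {poly F}, (size Q' <= (uphalf (size h).-1).+1)%N /\
             gauss_gt (h - Q' ^+ 2)%R (a + tau).
Proof.
move=> hQ t2 hgt; have w2p := w2_gt0; set B := (uphalf (size h).-1).+1.
set Ql := (\poly_(i < B) Q`_i)%R; set Qh := (Q - Ql)%R.
have hQl : gauss_ge Ql (a / 2).
  by move=> j; rewrite coef_poly; case: ifP => _; [exact: hQ | rewrite v0 leey].
have Qh_low j : (j < B)%N -> Qh`_j = 0%R by rewrite coefB coef_poly => ->; rewrite subrr.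
have sh : (size h <= B.*2)%N.
  by have := size_le_double_uphalf (size h).-1; rewrite /B doubleS; lia.
have eQ : Q = (Ql + Qh)%R by rewrite addrC subrK.
have gtQh : gauss_gt Qh ((a + tau) / 2).
  by apply: gauss_gt_high_part hQl (size_poly _ _) Qh_low sh t2 _; rewrite -eQ.
exists Ql; split; first exact: size_poly.
have -> : (h - Ql ^+ 2 = (h - Q ^+ 2) + (Ql * Qh) *+ 2 + Qh ^+ 2)%R by rewrite eQ; ring.
apply: gauss_gtD; first apply: gauss_gtD => //.
  by apply: gauss_gt_le (gauss_gtMn2 (gauss_gtMr hQl gtQh)) _; lra.
by rewrite expr2; apply: gauss_gt_le (gauss_gtMl gtQh (gauss_gtW gtQh)) _; lra.
Qed.

(* [Hp] is [Qp^2] up to small terms, and [Qp^2] is its even part [E] up to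
   twice a polynomial; multiplying by [E] shifts the valuations of the odd
   coefficients by exactly [Ap]. *)
Lemma odd_coefs_gt_mul_near_square rho0 Hp Qp X L0 Ap :
  gauss_ge rho0 L0 -> gauss_eq Hp Ap -> gauss_gt (Hp - Qp ^+ 2)%R Ap ->
  gauss_gt X (L0 + Ap) ->
  odd_coefs_gt (rho0 * Hp + X)%R (L0 + Ap) <-> odd_coefs_gt rho0 L0.
Proof.
move=> hr0 hH hR hX; have w2p := w2_gt0.
have vQ2 : gauss_eq (Qp ^+ 2)%R Ap.
  by have := gauss_eqB hH hR; rewrite opprB addrC subrK.
have [vQ [i hi]] := gauss_eq_of_sqr vQ2.
have [E [C [es hodd hev hC]]] := sqr_decomp Qp.
have vE : gauss_eq E Ap.
  split; last by exists i.*2; rewrite hev expr2 vM hi -EFinD; congr _%:E; field.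
  move=> k; have [/hodd ->|hk] := boolP (odd k); first by rewrite v0 leey.
  rewrite -[k]odd_double_half (negbTE hk) add0n hev expr2.
  by have := vM_ge (vQ k./2) (vQ k./2); rewrite -splitr.
have -> : (rho0 * Hp + X =
    rho0 * E + (X + rho0 * (Hp - Qp ^+ 2) + rho0 * (C *+ 2)))%R.
  by rewrite es; ring.
rewrite odd_coefs_gtD; first exact: odd_coefs_gtM_even.
apply: gauss_gtD; first apply: gauss_gtD => //; first exact: gauss_gtMr.
apply: gauss_ge_lt (gauss_geM hr0 (gauss_geMn2 (hC _ vQ))) _.
by rewrite -splitr; lra.
Qed.

Section SquareRoots.
Hypothesis sqrt_exists : forall x : F, exists y, (y ^+ 2)%R = x.

Lemma poly_sqrt_even_coefs (rho : {poly F}) :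
  exists s : {poly F}, forall i, (s`_i ^+ 2)%R = rho`_i.*2.
Proof.
have sq (x : F) : exists y, (y ^+ 2)%R == x.
  by have [y hy] := sqrt_exists x; exists y; apply/eqP.
exists (\poly_(i < size rho) xchoose (sq rho`_i.*2)) => i.
rewrite coef_poly; case: ltnP => hi; first exact/eqP/(xchooseP (sq _)).
by rewrite expr0n nth_default //; apply: leq_trans hi _; rewrite -addnn leq_addr.
Qed.

(* If all odd coefficients of [rho] are small, [rho] is a square up to small
   terms: adding to [q] the polynomial [s] with [s_i^2 = rho_(2i)] improves the
   decomposition. *)
Lemma better_decomp_of_odd_coefs_gt (h q rho : {poly F}) a tau :
  h = (q ^+ 2 + rho)%R -> gauss_ge q (a / 2) -> gauss_ge rho (a + tau) ->
  odd_coefs_gt rho (a + tau) -> (tau < 2 * w2)%R ->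
  exists s, gauss_gt (h - (q + s) ^+ 2)%R (a + tau).
Proof.
move=> eh hq hr hodd t2; have w2p := w2_gt0.
have [s hs] := poly_sqrt_even_coefs rho.
have s_ge : gauss_ge s ((a + tau) / 2).
  move=> i; have := hr i.*2; rewrite -hs expr2 vM.
  have [->|/v_fin [m ->]] := eqVneq s`_i 0%R; first by rewrite v0 => _; exact: leey.
  by rewrite -EFinD !lee_fin => ?; lra.
have [E [C [es hoddE hev hC]]] := sqr_decomp s.
exists s; have -> : (h - (q + s) ^+ 2 = (rho - E) - C *+ 2 - (q * s) *+ 2)%R.
  by rewrite eh sqrrD es; ring.
apply: gauss_gtB; first apply: gauss_gtB.
- move=> k; rewrite coefB; have [hk|hk] := boolP (odd k).
    by rewrite hoddE // subr0; apply: hodd.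
  by rewrite -[k]odd_double_half (negbTE hk) add0n hev hs subrr v0 ltey.
- by apply: gauss_ge_lt (gauss_geMn2 (hC _ s_ge)) _; lra.
- by apply: gauss_ge_lt (gauss_geMn2 (gauss_geM hq s_ge)) _; lra.
Qed.

Lemma good_iff_odd_coef (h Q rho : {poly F}) a tau :
  gauss_eq h a -> h = (Q ^+ 2 + rho)%R -> tqr v h rho = tau%:E ->
  (0 <= tau)%R -> (tau < 2 * w2)%R ->
  good v h Q rho <-> ~ odd_coefs_gt rho (a + tau).
Proof.
move=> hh eh et t0 t2.
have hr : gauss_ge rho (a + tau) by apply/(tqr_geP _ _ hh); rewrite et.
have root_ge (Q' rho' : {poly F}) : h = (Q' ^+ 2 + rho')%R ->
    gauss_ge rho' (a + tau) -> gauss_ge Q' (a / 2).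
  move=> e' hr'; apply: gauss_ge_of_sqr; apply: gauss_ge_decomp_sqr (proj1 hh) e' _.
  by apply: gauss_ge_le hr' _; lra.
have hQ := root_ge _ _ eh hr.
split.
  move=> [_ [hge|[_ hno]] hodd].
    by move: hge; rewrite et hw2 -EFinM lee_fin; lra.
  have [s hs] := better_decomp_of_odd_coefs_gt eh hQ hr hodd t2.
  have hQs : gauss_ge (Q + s)%R (a / 2).
    by apply: root_ge (gauss_gtW hs); rewrite addrC subrK.
  have [Q' [sQ' hQ']] := truncate_decomp hQs t2 hs.
  apply: hno; exists Q', (h - Q' ^+ 2)%R; split; first by split; rewrite // addrC subrK.
  by rewrite et; apply/(tqr_gtP _ _ hh).
move=> hn; split=> //; right; split; first by rewrite et hw2 -EFinM lte_fin.
move=> [q' [rho' [[e' _] /=]]]; rewrite et => /(tqr_gtP _ _ hh) hr'.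
have hq' := root_ge _ _ e' (gauss_gtW hr').
by apply: hn; exact: odd_coefs_gt_of_better_decomp eh e' hQ hq' hr hr' t2.
Qed.

End SquareRoots.

Section TwoFactors.
Variables (h1 h2 q1 q2 rho1 rho2 : {poly F}) (b1 b2 tau : rat).
Local Notation d1 := (size h1).-1.
Local Notation rho := (h1 * h2 - (q1 * q2) ^+ 2)%R.
Hypothesis decomp1 : h1 = (q1 ^+ 2 + rho1)%R.
Hypothesis decomp2 : h2 = (q2 ^+ 2 + rho2)%R.
Hypothesis size_q1 : (size q1 <= (uphalf d1).+1)%N.
Hypothesis h1_dom : dominant_coef h1 d1 b1.
Hypothesis h2_dom : dominant_coef h2 0 b2.
Hypothesis rho1_ge : gauss_ge rho1 (b1 + tau).
Hypothesis rho2_ge : gauss_ge rho2 (b2 + tau).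
Hypothesis tau_ge0 : (0 <= tau)%R.

Let rho1E : rho1 = (h1 - q1 ^+ 2)%R.
Proof. by rewrite decomp1 addrC addKr. Qed.

Let h2_ge : gauss_ge h2 b2.
Proof. exact: (gauss_eq_dominant h2_dom).1. Qed.

Let q1_ge : gauss_ge q1 (b1 / 2).
Proof.
apply: gauss_ge_of_sqr (gauss_ge_decomp_sqr (gauss_eq_dominant h1_dom).1 decomp1 _).
by apply: gauss_ge_le rho1_ge _; have := tau_ge0; lra.
Qed.

Let q2_ge : gauss_ge q2 (b2 / 2).
Proof.
apply: gauss_ge_of_sqr (gauss_ge_decomp_sqr h2_ge decomp2 _).
by apply: gauss_ge_le rho2_ge _; have := tau_ge0; lra.
Qed.

Lemma defect_coef_top : odd d1 -> v rho`_d1 = (b1 + b2)%:E.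
Proof.
move=> hodd; have w2p := w2_gt0; rewrite coefB; apply: vD_eq.
  rewrite coefM (bigD1 ord_max) //= subnn; apply: vD_eq.
    by rewrite vM h1_dom.1 h2_dom.1.
  apply: vsum_gt => j /eqP hj; apply: vM_gtl (h2_ge _); apply: h1_dom.2.
  by apply/eqP => e; apply: hj; apply: val_inj.
rewrite vN; apply: lt_le_trans _ (odd_coef_sqr_ge (gauss_geM q1_ge q2_ge) hodd).
by rewrite lte_fin; lra.
Qed.

Lemma odd_coef_rho1_gt k : odd k -> k != d1 -> b1%:E < v rho1`_k.
Proof.
move=> hk kd; have w2p := w2_gt0; rewrite rho1E coefB.
apply: vB_gt (h1_dom.2 _ kd) (lt_le_trans _ (odd_coef_sqr_ge q1_ge hk)).
by rewrite lte_fin; lra.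
Qed.

(* This is where the degree bound [size_q1] on part-square decompositions
   matters. *)
Lemma odd_coef_rho1_lt_top k : odd k -> k != d1 -> rho1`_k != 0%R -> (k < d1)%N.
Proof.
move=> hk kd rk; have kr : (k < size rho1)%N.
  by rewrite ltnNge; apply: contra rk => ?; rewrite nth_default.
have s1 : (size rho1 <= maxn (size h1) (size (q1 ^+ 2)%R))%N.
  by rewrite rho1E; apply: leq_trans (size_polyD _ _) _; rewrite size_polyN.
have s2 : (size (q1 ^+ 2)%R <= (size q1 + size q1).-1)%N.
  by rewrite expr2; exact: size_polyMleq.
have sh : (size h1 <= d1.+1)%N := leqSpred _.
have ek := odd_double_half k; have ed := odd_double_half d1; rewrite hk in ek.
move: kr s1 s2 sh size_q1 kd ek ed; rewrite uphalf_half.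
by case: (odd d1) => /= *; lia.
Qed.

Lemma defect_coef_below_top k : (k < d1)%N -> v rho1`_k = (b1 + tau)%:E ->
  (0 < tau)%R -> v rho`_k = (b1 + b2 + tau)%:E.
Proof.
move=> kd hk t_gt0.
have sqr_q1_gt j : j != d1 -> b1%:E < v (q1 ^+ 2)%R`_j.
  move=> jd; have -> : ((q1 ^+ 2)`_j = h1`_j - rho1`_j)%R.
    by rewrite rho1E coefB opprB addrC subrK.
  by apply: vB_gt (h1_dom.2 _ jd) (lt_le_trans _ (rho1_ge j)); rewrite lte_fin; lra.
have rho2E : rho2 = (h2 - q2 ^+ 2)%R by rewrite decomp2 addrC addKr.
rewrite prod_sqr_defect -rho1E -rho2E coefD.
have -> : (b1 + b2 + tau = b1 + tau + b2)%R by ring.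
apply: vD_eq.
  rewrite coefM (bigD1 ord_max) //= subnn; apply: vD_eq; first by rewrite vM hk h2_dom.1.
  apply: vsum_gt => j /eqP hj; have jk : (j < k)%N.
    by rewrite ltn_neqAle -ltnS ltn_ord andbT; apply/eqP => e; apply: hj; apply: val_inj.
  by apply: vM_gtr (rho1_ge j) (h2_dom.2 _ _); rewrite subn_eq0 -ltnNge.
rewrite coefM; apply: vsum_gt => j _; have -> : (b1 + tau + b2 = b1 + (b2 + tau))%R by ring.
apply: vM_gtl (sqr_q1_gt _ _) (rho2_ge _); rewrite neq_ltn.
by apply/orP; left; apply: leq_ltn_trans kd; rewrite -ltnS.
Qed.

Lemma two_factors_odd_coef k : odd k -> v rho1`_k <= (b1 + tau)%:E ->
  exists k', odd k' /\ v rho`_k' <= (b1 + b2 + tau)%:E.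
Proof.
move=> hk hvk; have t0 := tau_ge0; have [kd|kd] := eqVneq k d1.
  have hd : odd d1 by rewrite -kd.
  by exists d1; split=> //; rewrite defect_coef_top // lee_fin; lra.
have hgt := odd_coef_rho1_gt hk kd.
have t_gt0 : (0 < tau)%R by move: (lt_le_trans hgt hvk); rewrite lte_fin; lra.
have hvk' : v rho1`_k = (b1 + tau)%:E by apply/eqP; rewrite eq_le hvk rho1_ge.
have rk : rho1`_k != 0%R by apply: contraPneq hvk' => ->; rewrite v0.
exists k; split=> //.
by rewrite (defect_coef_below_top (odd_coef_rho1_lt_top hk kd rk) hvk' t_gt0).
Qed.

End TwoFactors.
End ResidueCharTwo.

Lemma coef_XsubCM (z : F) (P : {poly F}) j :
  (('X - z%:P) * P)%R`_j = ((if j == 0%N then 0 else P`_j.-1) - z * P`_j)%R.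
Proof. by rewrite mulrBl coefB coefXM coefCM. Qed.

Lemma prod_XsubC_top_dominant (rs : seq F) : (forall z, z \in rs -> 0%:E < v z) ->
  dominant_coef (\prod_(z <- rs) ('X - z%:P))%R (size rs) 0.
Proof.
elim: rs => [|z rs IH] hz.
  by rewrite big_nil; split=> [|[|j] //= _]; rewrite coefC /= ?v1 ?v0 ?ltey.
have [IH1 IH2] := IH (fun y hy => hz y (mem_behead (s:=z :: rs) hy)).
have hz0 : 0%:E < v z by apply: hz; rewrite inE eqxx.
set P := (\prod_(z <- rs) ('X - z%:P))%R.
have hzP j : 0%:E < v (z * P`_j)%R.
  have Pge : 0%:E <= v P`_j.
    by case: (eqVneq j (size rs)) => [->|/IH2 /ltW //]; rewrite IH1.
  by have := vM_gtl hz0 Pge; rewrite addr0.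
rewrite big_cons -/P /=; split.
  by rewrite coef_XsubCM /=; apply: vD_eq; rewrite ?vN.
move=> [|j] hj; rewrite coef_XsubCM /=; first by rewrite sub0r vN.
by apply: vB_gt => //; apply: IH2; move: hj; rewrite eqSS.
Qed.

Lemma prod_XsubC_const_dominant (rs : seq F) : (forall z, z \in rs -> v z < 0%:E) ->
  exists b, dominant_coef (\prod_(z <- rs) ('X - z%:P))%R 0 b.
Proof.
elim: rs => [|z rs IH] hz.
  by exists 0%R; rewrite big_nil; split=> [|[|j] //= _]; rewrite coefC /= ?v1 ?v0 ?ltey.
have [b [IH1 IH2]] := IH (fun y hy => hz y (mem_behead (s:=z :: rs) hy)).
have hz0 : v z < 0%:E by apply: hz; rewrite inE eqxx.
have [c hc] : exists c, v z = c%:E by apply: v_fin; apply: contraTneq hz0 => ->; rewrite v0.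
set P := (\prod_(z <- rs) ('X - z%:P))%R.
have Pge j : b%:E <= v P`_j by case: j => [|j]; [rewrite IH1 | exact/ltW/IH2].
exists (c + b)%R; rewrite big_cons -/P; split.
  by rewrite coef_XsubCM /= sub0r vN vM hc IH1.
move=> [//|j] _; rewrite coef_XsubCM /=; apply: vB_gt.
  by apply: lt_le_trans (Pge j); rewrite lte_fin gtrDr -lte_fin -hc.
by rewrite vM hc EFinD lee_ltD // IH2.
Qed.

End Valuation.

(** * Products of part-square decompositions *)

Section ClosedField.
Variables (F : closedFieldType) (v : F -> \bar rat).
Hypothesis hv : is_valuation v.

Lemma closed_sqrt_exists (x : F) : exists y, (y ^+ 2)%R = x.
Proof.
have /closed_rootP [y] : size ('X^2 - x%:P : {poly F})%R != 1%N by rewrite size_XnsubC.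
by rewrite /root !hornerE subr_eq0 => /eqP; exists y.
Qed.

Lemma top_coef_dominant (h : {poly F}) : h != 0%R ->
  (forall s, root h s -> 0%:E < v s) -> exists b, dominant_coef v h (size h).-1 b.
Proof.
move=> hn0 hroot; case: (closed_field_poly_normal h) => rs eh.
have lc0 : lead_coef h != 0%R by rewrite lead_coef_eq0.
have hrs z : z \in rs -> 0%:E < v z.
  by move=> hz; apply: hroot; rewrite eh rootZ // root_prod_XsubC.
have [c hc] := v_fin hv lc0; have [P1 P2] := prod_XsubC_top_dominant hv hrs.
have sh : (size h).-1 = size rs by rewrite eh size_scale // size_prod_XsubC.
exists c; rewrite /dominant_coef sh eh coefZ (vM hv) hc P1 adde0; split=> // j hj.
by rewrite coefZ (vM hv) hc lteDl //; exact: P2.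
Qed.

Lemma const_coef_dominant (h : {poly F}) : h != 0%R ->
  (forall s, root h s -> v s < 0%:E) -> exists b, dominant_coef v h 0 b.
Proof.
move=> hn0 hroot; case: (closed_field_poly_normal h) => rs eh.
have lc0 : lead_coef h != 0%R by rewrite lead_coef_eq0.
have hrs z : z \in rs -> v z < 0%:E.
  by move=> hz; apply: hroot; rewrite eh rootZ // root_prod_XsubC.
have [c hc] := v_fin hv lc0; have [b [P1 P2]] := prod_XsubC_const_dominant hv hrs.
exists (c + b)%R; rewrite /dominant_coef eh coefZ (vM hv) hc P1; split=> // j hj.
by rewrite coefZ (vM hv) hc EFinD lee_ltD // P2.
Qed.

End ClosedField.

Section ProductDecomposition.
Variables (F : closedFieldType) (v : F -> \bar rat).
Hypothesis hv : is_valuation v.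
Variable w2 : rat.
Hypothesis hw2 : v 2%R = w2%:E.
Hypothesis w2_gt0 : (0 < w2)%R.
Variables (N : nat) (hs qs rhos : 'I_N -> {poly F}).
Hypothesis hs_neq0 : forall i, hs i != 0%R.
Hypothesis hps : forall i, part_square (hs i) (qs i) (rhos i).
Hypothesis t_ge0 : forall i, 0 <= tqr v (hs i) (rhos i).

Local Notation h := (\prod_(i < N) hs i)%R.
Local Notation q := (\prod_(i < N) qs i)%R.
Local Notation rho := (h - q ^+ 2)%R.
Local Notation t i := (tqr v (hs i) (rhos i)).
Local Notation tmin := (\big[Order.min/+oo]_(i < N) t i).

Let a i := fine (gaussv v (hs i)).

Let gauss_eq_factor i : gauss_eq v (hs i) (a i).
Proof.
by have [x hx] := gauss_eq_exists hv (hs_neq0 i); rewrite /a (gauss_eq_gaussv hv hx).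
Qed.

Let rhosE i : rhos i = (hs i - qs i ^+ 2)%R.
Proof. by case: (hps i) => -> _; rewrite addrC addKr. Qed.

Let gauss_ge_factor_sqr i : gauss_ge v (qs i ^+ 2)%R (a i).
Proof.
apply: (gauss_ge_decomp_sqr hv) (proj1 (gauss_eq_factor i)) (proj1 (hps i)) _.
by rewrite -[a i]addr0; apply/(tqr_geP hv _ _ (gauss_eq_factor i)).
Qed.

Lemma tqr_prod_ge_min : tmin <= tqr v h rho.
Proof.
have vh : gauss_eq v h (\sum_(i < N) a i).
  by apply: (gauss_eq_prod hv) => i _; exact: gauss_eq_factor.
apply: le_ereal_rat => r /bigmin_geP [_ hr]; apply/(tqr_geP hv _ _ vh).
apply: (prod_defect_ge hv) => [i _|i _|i _]; first exact: (proj1 (gauss_eq_factor i)).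
  exact: gauss_ge_factor_sqr.
by rewrite -rhosE; apply/(tqr_geP hv _ _ (gauss_eq_factor i)); exact: hr.
Qed.

Let good_prod_iff_of_large i0 :
  2%:E * v 2%R <= t i0 -> 2%:E * v 2%R <= tqr v h rho ->
  good v h q rho <-> good v (hs i0) (qs i0) (rhos i0).
Proof.
move=> hi hh; split=> _; split; try by left.
  exact: (proj1 (hps i0)).
by rewrite addrC subrK.
Qed.

Lemma tqr_prod_unique_min_fin i0 tau :
  t i0 = tau%:E -> (forall j, j != i0 -> tau%:E < t j) ->
  tqr v h rho = tau%:E /\ (good v h q rho <-> good v (hs i0) (qs i0) (rhos i0)).
Proof.
move=> E0 hmin; have t0 : (0 <= tau)%R by rewrite -lee_fin -E0.
set Hp := (\prod_(j < N | j != i0) hs j)%R; set Qp := (\prod_(j < N | j != i0) qs j)%R.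
set Ap := (\sum_(j < N | j != i0) a j)%R.
have vHp : gauss_eq v Hp Ap by apply: (gauss_eq_prod hv) => j _; exact: gauss_eq_factor.
have eh : h = (hs i0 * Hp)%R by rewrite (bigD1 i0).
have eq : q = (qs i0 * Qp)%R by rewrite (bigD1 i0).
have vh : gauss_eq v h (a i0 + Ap).
  by rewrite eh; exact: (gauss_eqM hv (gauss_eq_factor i0) vHp).
have defect_gt : gauss_gt v (Hp - Qp ^+ 2)%R (Ap + tau).
  apply: (prod_defect_gt hv) => [j _|j _|j hj]; first exact: (proj1 (gauss_eq_factor j)).
    exact: gauss_ge_factor_sqr.
  by rewrite -rhosE; apply/(tqr_gtP hv _ _ (gauss_eq_factor j)); exact: hmin.
set X := (qs i0 ^+ 2 * (Hp - Qp ^+ 2))%R.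
have erho : rho = (rhos i0 * Hp + X)%R by rewrite eh eq prod_sqr_defect -rhosE.
have hX : gauss_gt v X (a i0 + tau + Ap).
  by rewrite -addrA (addrC tau); exact: (gauss_gtMr hv (gauss_ge_factor_sqr i0) defect_gt).
have vr0 := gauss_eq_tqr hv (gauss_eq_factor i0) E0.
have et : tqr v h rho = tau%:E.
  apply: (tqr_gauss_eq hv vh); rewrite erho -addrA (addrC Ap) addrA.
  exact: (gauss_eqD hv (gauss_eqM hv vr0 vHp) hX).
split=> //; have [t2|t2] := ltP tau (2 * w2)%R; last first.
  have ht : 2%:E * v 2%R <= tau%:E by rewrite hw2 -EFinM lee_fin.
  by apply: good_prod_iff_of_large; rewrite ?et ?E0.
have sq := @closed_sqrt_exists F.
rewrite (good_iff_odd_coef hv hw2 w2_gt0 sq vh _ et t0 t2); last by rewrite addrC subrK.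
rewrite (good_iff_odd_coef hv hw2 w2_gt0 sq (gauss_eq_factor i0) (proj1 (hps i0)) E0 t0 t2).
rewrite erho -addrA (addrC Ap) addrA.
rewrite (odd_coefs_gt_mul_near_square hv hw2 w2_gt0 (proj1 vr0) vHp) //.
by apply: (gauss_gt_le defect_gt); rewrite lerDl.
Qed.

Lemma tqr_prod_unique_min i0 : (forall j, j != i0 -> t i0 < t j) ->
  tqr v h rho = tmin /\ (good v h q rho <-> good v (hs i0) (qs i0) (rhos i0)).
Proof.
move=> hmin; have etmin : tmin = t i0.
  by apply: bigmin_eq_of_le => j; have [->|/hmin/ltW] := eqVneq j i0.
rewrite etmin.
case E0: (t i0) => [tau||].
- by apply: tqr_prod_unique_min_fin => // j /hmin; rewrite E0.
- have et : tqr v h rho = +oo.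
    by apply/eqP; rewrite eq_le leey -E0 -etmin tqr_prod_ge_min.
  by split=> //; apply: good_prod_iff_of_large; rewrite ?et ?E0 leey.
- by have := t_ge0 i0; rewrite E0.
Qed.

Lemma tqr_prod_two_factors_eq i1 i2 tau :
  (forall j, j = i1 \/ j = i2) -> i1 != i2 ->
  (forall s, root (hs i1) s -> 0 < v s) -> (forall s, root (hs i2) s -> v s < 0) ->
  good v (hs i1) (qs i1) (rhos i1) ->
  t i1 = tau%:E -> t i2 = tau%:E -> (tau < 2 * w2)%R ->
  tqr v h rho = tau%:E /\ good v h q rho.
Proof.
move=> hj i12 r1 r2 g1 E1 E2 t2; have t0 : (0 <= tau)%R by rewrite -lee_fin -E1.
have only_i2 j : (j != i1) = (j == i2).
  by case: (hj j) => ->; rewrite eqxx ?(negbTE i12) // eq_sym.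
have eh : h = (hs i1 * hs i2)%R by rewrite (bigD1 i1) // (big_pred1 i2 only_i2).
have eq : q = (qs i1 * qs i2)%R by rewrite (bigD1 i1) // (big_pred1 i2 only_i2).
have [b1 dom1] := top_coef_dominant hv (hs_neq0 i1) r1.
have [b2 dom2] := const_coef_dominant hv (hs_neq0 i2) r2.
have vh1 := gauss_eq_dominant dom1; have vh2 := gauss_eq_dominant dom2.
have vh : gauss_eq v h (b1 + b2) by rewrite eh; exact: (gauss_eqM hv vh1 vh2).
have rho1_ge : gauss_ge v (rhos i1) (b1 + tau) by apply/(tqr_geP hv _ _ vh1); rewrite E1.
have rho2_ge : gauss_ge v (rhos i2) (b2 + tau) by apply/(tqr_geP hv _ _ vh2); rewrite E2.
have sq := @closed_sqrt_exists F.
have [k [hk hvk]] := not_odd_coefs_gt hv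
  ((good_iff_odd_coef hv hw2 w2_gt0 sq vh1 (proj1 (hps i1)) E1 t0 t2).1 g1).
have [k' [hk' hvk']] := two_factors_odd_coef hv hw2 w2_gt0 (proj1 (hps i1))
  (proj1 (hps i2)) (proj2 (hps i1)) dom1 dom2 rho1_ge rho2_ge t0 hk hvk.
rewrite -eh -eq in hvk'.
have et : tqr v h rho = tau%:E.
  apply/eqP; rewrite eq_le (tqr_le_coef hv vh hvk') -E1.
  rewrite -(@bigmin_eq_of_le _ (fun i => t i)) ?tqr_prod_ge_min // => j.
  by case: (hj j) => ->; rewrite ?E1 ?E2.
have ehq : h = (q ^+ 2 + rho)%R by rewrite addrC subrK.
split=> //; apply/(good_iff_odd_coef hv hw2 w2_gt0 sq vh ehq et t0 t2).
by move=> /(_ k' hk'); rewrite ltNge hvk'.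
Qed.

Lemma tqr_prod_two_factors : (N = 2)%N -> forall i1 i2 : 'I_N,
  nat_of_ord i1 = 0%N -> nat_of_ord i2 = 1%N ->
  (forall s, root (hs i1) s -> 0 < v s) -> (forall s, root (hs i2) s -> v s < 0) ->
  good v (hs i1) (qs i1) (rhos i1) -> good v (hs i2) (qs i2) (rhos i2) ->
  tmin < 2%:E * v 2%R -> tqr v h rho = tmin /\ good v h q rho.
Proof.
move=> N2 i1 i2 e1 e2 r1 r2 g1 g2 tlt.
have hj (j : 'I_N) : j = i1 \/ j = i2.
  case: j => m hm; have : (m < 2)%N by rewrite -N2.
  case: m hm => [|[|m]] hm // _; [left | right];
  by apply: val_inj; rewrite /= ?e1 ?e2.
have i12 : i1 != i2 by apply/eqP => e; move: e1; rewrite e e2.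
have [lt12|lt21|eq12] := ltgtP (t i1) (t i2).
- have [|et eg] := tqr_prod_unique_min (i0 := i1); last by split; rewrite // eg.
  by move=> j; case: (hj j) => -> //; rewrite eqxx.
- have [|et eg] := tqr_prod_unique_min (i0 := i2); last by split; rewrite // eg.
  by move=> j; case: (hj j) => -> //; rewrite eqxx.
have etmin : tmin = t i1.
  by apply: bigmin_eq_of_le => j; case: (hj j) => ->; rewrite -?eq12.
move: tlt (t_ge0 i1); rewrite etmin hw2 -EFinM.
case E1: (t i1) => [tau||] //; rewrite lte_fin => t2 _.
have E2 : t i2 = tau%:E by rewrite -eq12.
exact: tqr_prod_two_factors_eq hj i12 r1 r2 g1 E1 E2 t2.
Qed.

End ProductDecomposition.

Theorem proposition3p16 (Kbar : closedFieldType) (K : {pred Kbar})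
  (v : Kbar -> \bar rat) (S : setting K v)
  (N : nat) (hs qs rhos : 'I_N -> {poly Kbar}) :
  (forall i, hs i != 0%R) ->
  (forall i, part_square (hs i) (qs i) (rhos i)) ->
  (forall i, 0 <= tqr v (hs i) (rhos i)) ->
  let h := (\prod_(i < N) hs i)%R in
  let q := (\prod_(i < N) qs i)%R in
  let rho := (h - q ^+ 2)%R in
  let tmin := \big[Order.min/+oo]_(i < N) tqr v (hs i) (rhos i) in
  tmin <= tqr v h rho /\
  (forall i0 : 'I_N,
     (forall j : 'I_N, j != i0 -> tqr v (hs i0) (rhos i0) < tqr v (hs j) (rhos j)) ->
     tqr v h rho = tmin /\ (good v h q rho <-> good v (hs i0) (qs i0) (rhos i0))) /\
  ((N = 2)%N -> forall i1 i2 : 'I_N, nat_of_ord i1 = 0%N -> nat_of_ord i2 = 1%N ->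
     (forall s, root (hs i1) s -> 0 < v s) ->
     (forall s, root (hs i2) s -> v s < 0) ->
     good v (hs i1) (qs i1) (rhos i1) -> good v (hs i2) (qs i2) (rhos i2) ->
     tmin < 2%:E * v 2%R ->
     tqr v h rho = tmin /\ good v h q rho).
Proof.
move=> hs_neq0 hps t_ge0 h q rho tmin.
have hv := v_val S.
have [w2 hw2] : exists w2, v 2%R = w2%:E.
  by apply: (v_fin hv); rewrite ((pcharf0P _).1 (char0 S) 2%N).
have w2_gt0 : (0 < w2)%R by rewrite -lte_fin -hw2 (residue_char2 S).
split; first exact: tqr_prod_ge_min.
split; first exact: (tqr_prod_unique_min hv hw2 w2_gt0).
exact: (tqr_prod_two_factors hv hw2 w2_gt0).
Qed.
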